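(* Let $\Gamma=((V,E),m)$ be an even Artin–Tits system whose underlying graph $(V,E)$ is a finite tree. Then $K_\Gamma$ is a finitely generated free group.
   Context: An Artin–Tits system $\Gamma=((V,E),m)$ consists of a simplicial graph $(V,E)$ and a labelling $m\colon E\to\{2,3,\dots\}$; it is even if all labels are even. $G_\Gamma=\langle V \mid \mathrm{prod}(u,v,m(\{u,v\}))=\mathrm{prod}(v,u,m(\{u,v\}))\ \forall \{u,v\}\in E\rangle$, where $\mathrm{prod}(u,v,n)$ is the prefix of length $n$ of $uvuv\cdots$. $K_\Gamma$ is the kernel of the homomorphism $G_\Gamma\to\mathbb{Z}$ sending every $v\in V$ to $1$. *)

From mathcomp Require Import all_boot all_algebra.
Set Implicit Arguments.
Unset Strict Implicit.
Unset Printing Implicit Defensive.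

(* A letter over an alphabet X: (x, false) is x, (x, true) is x^-1. *)
Definition word (X : Type) := seq (X * bool).

Definition inv_letter (X : Type) (a : X * bool) : X * bool := (a.1, ~~ a.2).
Definition inv_word (X : Type) (w : word X) : word X := rev (map (@inv_letter X) w).

Definition prodw (X : Type) (u v : X) (n : nat) : word X :=
  mkseq (fun i => if odd i then (v, false) else (u, false)) n.

Definition simple_graph (V : finType) (e : rel V) : Prop :=
  (forall x y, e x y = e y x) /\ (forall x, ~~ e x x).

Definition is_tree (V : finType) (e : rel V) : Prop :=
  [/\ simple_graph e, 0 < #|V|, (forall x y, connect e x y) &
      (forall c : seq V, uniq c -> 3 <= size c -> ~~ cycle e c)].

Definition artin_labels (V : finType) (e : rel V) (m : V -> V -> nat) : Prop :=
  forall u v, e u v -> m u v = m v u /\ 2 <= m u v.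

Definition even_labels (V : finType) (e : rel V) (m : V -> V -> nat) : Prop :=
  forall u v, e u v -> ~~ odd (m u v).

(* Equality in G_Gamma: the congruence on words generated by free cancellation
   and the Artin relations prod(u,v,m) = prod(v,u,m) for edges {u,v}. *)
Inductive artin_eq (V : finType) (e : rel V) (m : V -> V -> nat) :
    word V -> word V -> Prop :=
  | ae_refl w : artin_eq e m w w
  | ae_sym w1 w2 : artin_eq e m w1 w2 -> artin_eq e m w2 w1
  | ae_trans w1 w2 w3 :
      artin_eq e m w1 w2 -> artin_eq e m w2 w3 -> artin_eq e m w1 w3
  | ae_cancel (p q : word V) (a : V * bool) :
      artin_eq e m (p ++ [:: a; inv_letter a] ++ q) (p ++ q)
  | ae_rel (p q : word V) (u v : V) :
      e u v -> artin_eq e m (p ++ prodw u v (m u v) ++ q)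
                            (p ++ prodw v u (m u v) ++ q).

(* Image of a word under the homomorphism G_Gamma -> Z sending each generator to 1. *)
Definition expsum (X : Type) (w : word X) : int :=
  \sum_(a <- w) (if a.2 then (-1)%R else 1%R).

(* Freely reduced words (= elements of the free group on X). *)
Definition reduced (X : eqType) (w : word X) : bool :=
  ~~ has (fun p : (X * bool) * (X * bool) => p.2 == inv_letter p.1)
         (zip w (behead w)).

Definition subst_word (V : Type) (n : nat) (ws : 'I_n -> word V)
    (u : word 'I_n) : word V :=
  flatten (map (fun a => if a.2 then inv_word (ws a.1) else ws a.1) u).

(* K_Gamma is a finitely generated free group: there are n and elements
   ws i of K_Gamma such that the induced homomorphism F_n -> G_Gamma is
   injective (trivial kernel on reduced words) with image exactly K_Gamma. *)
Definition K_fg_free (V : finType) (e : rel V) (m : V -> V -> nat) : Prop :=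
  exists (n : nat) (ws : 'I_n -> word V),
    [/\ (forall i, expsum (ws i) = 0%R),
        (forall u : word 'I_n, reduced u ->
            artin_eq e m (subst_word ws u) [::] -> u = [::]) &
        (forall w : word V, expsum w = 0%R ->
            exists u : word 'I_n, artin_eq e m w (subst_word ws u))].

(* Fix a root r.  The powers r^k form a transversal of K_Gamma, so K_Gamma is
   generated by the Schreier generators sgen v k = r^k v r^-(k+1); an Artin
   relation on an edge {u, v} with even label m becomes, for each shift s, a
   relation between m consecutive Schreier generators of u and v.  Orienting
   each edge from child c to parent p (label K + 1, K odd), this relation
   expresses sgen c (s+K) in terms of sgen c s, ..., sgen c (s+K-1) and the
   generators of p, and symmetrically sgen c s in terms of the later ones.
   Hence the generators sgen c j, c <> r, 0 <= j < K_c, form a free basis.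

   Finally, the free basis is built together with a retraction
   G_Gamma -> F(basis) that respects the Artin relations; it shows that the
   basis words are free (injectivity) and generate K_Gamma (surjectivity). *)

From mathcomp Require Import all_boot all_algebra zify.
Set Implicit Arguments.
Unset Strict Implicit.
Unset Printing Implicit Defensive.
Import GRing.Theory Num.Theory.

Section WordInversion.
Variable I : Type.
Implicit Types (a : I * bool) (x y : word I).

Lemma inv_letterK a : inv_letter (inv_letter a) = a.
Proof. by case: a => x b; rewrite /inv_letter /= negbK. Qed.

Lemma inv_word_cat x y : inv_word (x ++ y) = inv_word y ++ inv_word x.
Proof. by rewrite /inv_word map_cat rev_cat. Qed.

Lemma inv_wordK x : inv_word (inv_word x) = x.
Proof.
rewrite /inv_word map_rev revK -map_comp -[RHS]map_id.
by apply: eq_map => a /=; rewrite inv_letterK.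
Qed.

Lemma inv_word_cons a x : inv_word (a :: x) = inv_word x ++ [:: inv_letter a].
Proof. by rewrite -cat1s inv_word_cat. Qed.

End WordInversion.

(* Words
   are reduced right to left by pushing letters onto an already reduced word;
   [reduce x = reduce y] is equality in the free group on I. *)
Section FreeReduction.
Variable I : eqType.
Implicit Types (a : I * bool) (s t w x y p q : word I).

Definition push_letter a s : word I :=
  if s is b :: s' then (if b == inv_letter a then s' else a :: s) else [:: a].

Definition reduce w := foldr push_letter [::] w.

Fixpoint reduced_rec w : bool :=
  match w with
  | a :: ((b :: _) as s) => (b != inv_letter a) && reduced_rec s
  | _ => true
  end.

Lemma reduced_to_rec w : reduced w -> reduced_rec w.
Proof.
rewrite /reduced; elim: w => //= a w IH.
case: w IH => [|b w] //= IH.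
by rewrite negb_or => /andP[-> /IH].
Qed.

Lemma reduced_push a s : reduced_rec s -> reduced_rec (push_letter a s).
Proof.
case: s => [|b s] //= Hs.
case: ifP => [_|/negbT nb] /=; last by rewrite nb Hs.
by case: s Hs => [|c s] //= /andP[].
Qed.

Lemma reduced_foldr s x : reduced_rec s -> reduced_rec (foldr push_letter s x).
Proof. by move=> Hs; elim: x => //= a x IH; apply: reduced_push. Qed.

Lemma reduced_reduce w : reduced_rec (reduce w).
Proof. exact: reduced_foldr. Qed.

Lemma reduce_id w : reduced_rec w -> reduce w = w.
Proof.
elim: w => //= a w IH.
case: w IH => [|b w] //= IH /andP[nb Hw].
by rewrite IH //= (negbTE nb).
Qed.

Lemma push_inv_letter a s : reduced_rec s ->
  push_letter a (push_letter (inv_letter a) s) = s.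
Proof.
case: s => [|b s] /=; first by rewrite eqxx.
rewrite inv_letterK; case: eqP => [-> | nb] /= Hs; last by rewrite eqxx.
by case: s Hs => [|c s] //= /andP[/negbTE ->].
Qed.

Lemma foldr_push s t a : reduced_rec s -> reduced_rec t ->
  foldr push_letter s (push_letter a t) = push_letter a (foldr push_letter s t).
Proof.
move=> Hs; case: t => [|b t] //= Ht.
case: eqP => [-> | _] //=.
by rewrite push_inv_letter // reduced_foldr.
Qed.

Lemma foldr_reduce s x : reduced_rec s ->
  foldr push_letter s x = foldr push_letter s (reduce x).
Proof.
move=> Hs; elim: x => //= a x IH.
by rewrite foldr_push ?reduced_reduce // IH.
Qed.

Lemma reduce_cat x y : reduce (x ++ y) = foldr push_letter (reduce y) x.
Proof. by rewrite /reduce foldr_cat. Qed.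

Lemma reduce_catr x y : reduce (x ++ y) = reduce (x ++ reduce y).
Proof. by rewrite !reduce_cat (reduce_id (reduced_reduce y)). Qed.

Lemma reduce_catl x y : reduce (x ++ y) = reduce (reduce x ++ y).
Proof.
rewrite !reduce_cat [in RHS]foldr_reduce ?reduced_reduce //.
by rewrite (reduce_id (reduced_reduce x)) -foldr_reduce ?reduced_reduce.
Qed.

Lemma reduce_cong x y p q :
  reduce x = reduce y -> reduce (p ++ x ++ q) = reduce (p ++ y ++ q).
Proof.
move=> Hxy; rewrite reduce_catr [in RHS]reduce_catr.
by rewrite (reduce_catl x q) (reduce_catl y q) Hxy.
Qed.

Lemma reduce_cancel x : reduce (x ++ inv_word x) = [::].
Proof.
elim: x => //= a x IH.
by rewrite inv_word_cons catA reduce_catl IH /= eqxx.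
Qed.

Lemma reduce_cancel_inv x : reduce (inv_word x ++ x) = [::].
Proof. by rewrite -{2}(inv_wordK x) reduce_cancel. Qed.

Lemma reduce_delete x p q :
  reduce x = [::] -> reduce (p ++ x ++ q) = reduce (p ++ q).
Proof. by move=> Hx; rewrite (reduce_cong p q (y := [::])) ?Hx. Qed.

End FreeReduction.

(* The parent of v <> r is a
   neighbour of strictly smaller depth; by acyclicity every edge joins a
   vertex to its parent, which is what lets us orient the Artin relations. *)
Section TreeParent.
Variables (V : finType) (e : rel V) (r : V).
Hypothesis e_sym : forall x y, e x y = e y x.
Hypothesis e_irr : forall x, ~~ e x x.
Hypothesis e_conn : forall x y, connect e x y.
Hypothesis e_acyc : forall c : seq V, uniq c -> 3 <= size c -> ~~ cycle e c.

Definition reach_in (v : V) (n : nat) : bool :=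
  [exists t : n.-tuple V, path e r t && (last r t == v)].

Lemma reach_in_ex v : exists n, reach_in v n.
Proof.
have /connectP[p Hp Hl] := e_conn r v.
exists (size p); apply/existsP; exists (in_tuple p) => /=.
by rewrite Hp -Hl eqxx.
Qed.

Definition depth v := ex_minn (reach_in_ex v).

Lemma depthP v : reach_in v (depth v).
Proof. by rewrite /depth; case: ex_minnP. Qed.

Lemma depth_min v k : reach_in v k -> depth v <= k.
Proof. by rewrite /depth; case: ex_minnP => n _ H /H. Qed.

Lemma depth_root : depth r = 0.
Proof.
apply/eqP; rewrite -leqn0; apply: depth_min.
by apply/existsP; exists [tuple]; rewrite /= eqxx.
Qed.

(* The second-to-last vertex of a shortest path is a closer neighbour. *)
Lemma closer_neighbour v : v != r -> exists u, e u v && (depth u < depth v).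
Proof.
move=> Hv; have /existsP[t /andP[Hp /eqP Hl]] := depthP v.
have Hs := size_tuple t.
move: Hp Hl Hs; case: (tval t) / lastP => [|q x] /=.
  by move=> _ Hl; rewrite -Hl eqxx in Hv.
rewrite rcons_path last_rcons size_rcons => /andP[Hq He] Ex Hs.
rewrite Ex in He; exists (last r q); rewrite He /= -Hs ltnS.
by apply: depth_min; apply/existsP; exists (in_tuple q) => /=; rewrite Hq eqxx.
Qed.

Definition parent v :=
  if [pick u | e u v && (depth u < depth v)] is Some u then u else r.

Lemma parentP v : v != r -> e (parent v) v && (depth (parent v) < depth v).
Proof.
move=> Hv; rewrite /parent; case: pickP => [u //|H].
by have [u Hu] := closer_neighbour Hv; rewrite H in Hu.
Qed.

Lemma parent_root : parent r = r.
Proof. by rewrite /parent; case: pickP => [u /andP[_]|//]; rewrite depth_root. Qed.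

Lemma depth_parent v : depth (parent v) <= depth v.
Proof.
have [->|Hv] := eqVneq v r; first by rewrite parent_root.
by have /andP[_ /ltnW] := parentP Hv.
Qed.

(* In a tree no such
   path exists, because it could be extended through a parent indefinitely. *)
Definition parent_free_path x mid y :=
  [&& uniq (x :: rcons mid y), path e x (rcons mid y),
      head y mid != parent x & last x mid != parent y].

Lemma parent_free_path_rev x mid y :
  parent_free_path x mid y -> parent_free_path y (rev mid) x.
Proof.
case/and4P => H1 H2 H3 H4; apply/and4P; split.
- by rewrite -rev_cons -rev_rcons rcons_cons rev_uniq.
- have := rev_path e x (rcons mid y).
  rewrite last_rcons belast_rcons rev_cons => ->.
  by rewrite (@eq_path _ _ e) // => a b /=; rewrite e_sym.
- by move: H4; clear; case: mid / lastP => [|s z] //; rewrite rev_rcons last_rcons.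
- by move: H3; clear; case: mid => [|z s] //; rewrite rev_cons last_rcons.
Qed.

(* Extending such a path through the parent of x: if the parent already
   occurred on the path, it would close a cycle of length at least 3. *)
Lemma parent_free_path_ext x mid y : x != r ->
  parent_free_path x mid y -> parent_free_path (parent x) (x :: mid) y.
Proof.
move=> Hx /and4P[H1 H2 H3 H4].
have /andP[Hzx Hd] := parentP Hx.
set z := parent x in Hzx Hd *.
have [Hin | Hnin] := boolP (z \in rcons mid y).
  exfalso.
  have H3' : head y (rcons mid y) != z by move: H3; clear; case: mid.
  move: H1 H2 H3'; case/splitPr: Hin => A B H1 H2 H3'.
  case: A H1 H2 H3' => [|a A] H1 H2 H3'; first by rewrite /= eqxx in H3'.
  have U : uniq (x :: rcons (a :: A) z).
    by move: H1; rewrite -cat_rcons -cat_cons cat_uniq => /andP[].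
  have Sz : 3 <= size (x :: rcons (a :: A) z) by rewrite /= size_rcons.
  have /negP := e_acyc U Sz; apply.
  rewrite /cycle rcons_path last_rcons Hzx andbT.
  by move: H2; rewrite -cat_rcons cat_path => /andP[].
apply/and4P; split => //=.
- move: H1 => /= /andP[-> ->]; rewrite in_cons negb_or Hnin !andbT.
  by apply/eqP => Ezx; rewrite Ezx ltnn in Hd.
- by apply/andP; split.
- by apply/negP => /eqP E; have := depth_parent z; rewrite -E; lia.
Qed.

Lemma no_parent_free_path x mid y : ~ parent_free_path x mid y.
Proof.
move: {2}(depth x + depth y).+1 (ltnSn (depth x + depth y)) => n.
elim: n x mid y => [|n IH] x mid y //= Hn H.
have [Ex|Hx] := eqVneq x r.
  have Hy : y != r.
    move: H => /and4P[/= /andP[H1 _] _ _ _].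
    by apply: contraNneq H1 => Ey; rewrite Ex Ey mem_rcons in_cons eqxx.
  have /andP[_ Hd] := parentP Hy.
  apply: (IH _ _ _ _ (parent_free_path_ext Hy (parent_free_path_rev H))); lia.
have /andP[_ Hd] := parentP Hx.
apply: (IH _ _ _ _ (parent_free_path_ext Hx H)); lia.
Qed.

Lemma edge_parent u v : e u v -> u = parent v \/ v = parent u.
Proof.
move=> Huv.
have [->|H1] := eqVneq u (parent v); first by left.
have [->|H2] := eqVneq v (parent u); first by right.
exfalso; apply: (@no_parent_free_path u [::] v).
apply/and4P; split => //=; last by rewrite Huv.
rewrite in_cons orbF andbT; apply/eqP => E.
by move: (e_irr v); rewrite -{1}E Huv.
Qed.

End TreeParent.

Definition concat_map (I : Type) (F : nat -> word I) (l : seq nat) : word I :=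
  flatten (map F l).

Lemma concat_map_cat (I : Type) (F : nat -> word I) l1 l2 :
  concat_map F (l1 ++ l2) = concat_map F l1 ++ concat_map F l2.
Proof. by rewrite /concat_map map_cat flatten_cat. Qed.

(* The free-group recurrence attached to an edge {c, p} with odd K = m - 1.
   Given the images P t of the Schreier generators of p, we want images f t
   for those of c satisfying, for every shift s, the relation
        f s . P (s+1) . f (s+2) ... P (s+K)  =  P s . f (s+1) ... f (s+K)
   in the free group.  Read forwards it determines f (s+K) from f s, ...,
   f (s+K-1); read backwards it determines f s from f (s+1), ..., f (s+K).
   So f is uniquely determined by the free values f 0, ..., f (K-1). *)
Section RelationSolution.
Local Open Scope ring_scope.
Variables (I : eqType) (P : int -> word I) (K : nat) (base : nat -> word I).
Hypothesis K_odd : odd K.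

(* The i-th factor of the two sides of the relation at shift s. *)
Definition alt_fP (f : int -> word I) (s : int) (i : nat) :=
  if odd i then P (s + i%:Z) else f (s + i%:Z).
Definition alt_Pf (f : int -> word I) (s : int) (i : nat) :=
  if odd i then f (s + i%:Z) else P (s + i%:Z).

(* Forward computation: a window W holds f s, ..., f (s+K-1). *)
Definition fwd_fP (W : seq (word I)) s i :=
  if odd i then P (s + i%:Z) else nth [::] W i.
Definition fwd_Pf (W : seq (word I)) s i :=
  if odd i then nth [::] W i else P (s + i%:Z).
Definition fwd_next W s :=
  reduce (inv_word (concat_map (fwd_Pf W s) (iota 0 K))
          ++ concat_map (fwd_fP W s) (iota 0 K.+1)).
(* window_up n = [:: f n; ...; f (n+K-1)]. *)
Fixpoint window_up (n : nat) : seq (word I) :=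
  if n is n'.+1 then
    rcons (behead (window_up n')) (fwd_next (window_up n') (Posz n'))
  else mkseq base K.

(* Backward computation: a window W holds f (s+1), ..., f (s+K). *)
Definition bwd_fP (W : seq (word I)) s i :=
  if odd i then P (s + i%:Z) else nth [::] W i.-1.
Definition bwd_Pf (W : seq (word I)) s i :=
  if odd i then nth [::] W i.-1 else P (s + i%:Z).
Definition bwd_next W s :=
  reduce (concat_map (bwd_Pf W s) (iota 0 K.+1)
          ++ inv_word (concat_map (bwd_fP W s) (iota 1 K))).
(* window_down n = [:: f (-n); ...; f (K-1-n)]. *)
Fixpoint window_down (n : nat) : seq (word I) :=
  if n is n'.+1 then
    bwd_next (window_down n') (Negz n') :: take K.-1 (window_down n')
  else mkseq base K.

Definition rel_solution (t : int) : word I :=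
  match t with
  | Posz n => nth [::] (window_up n) 0
  | Negz n => nth [::] (window_down n.+1) 0
  end.
Local Notation f := rel_solution.

Lemma K_gt0 : (0 < K)%N.
Proof. by case: K K_odd. Qed.

Lemma size_window_up n : size (window_up n) = K.
Proof.
elim: n => [|n IH] /=; first by rewrite size_mkseq.
by rewrite size_rcons size_behead IH prednK // K_gt0.
Qed.

Lemma window_up_shift i n : (i < K)%N ->
  nth [::] (window_up n) i = nth [::] (window_up (n + i)) 0.
Proof.
elim: i n => [|i IH] n Hi; first by rewrite addn0.
rewrite addnS -addSn -IH; last exact: ltnW.
rewrite /= nth_rcons size_behead size_window_up.
have -> : (i < K.-1)%N by move: Hi; case: (K).
by rewrite nth_behead.
Qed.

Lemma window_upE n i : (i < K)%N -> f (Posz n + i%:Z) = nth [::] (window_up n) i.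
Proof. by move=> Hi; rewrite -PoszD /= (window_up_shift n Hi). Qed.

Lemma window_downE n i : (i < K)%N -> nth [::] (window_down n) i = f (i%:Z - n%:Z).
Proof.
elim: n i => [|n IH] i Hi.
  by rewrite subr0 /= -[in RHS](add0n i) -window_up_shift.
case: i Hi => [|i] Hi /=; first by rewrite subn0.
rewrite nth_take; last by move: Hi; case: (K).
by rewrite IH; [congr f; lia | exact: ltnW].
Qed.

Lemma rel_solution_base j : (j < K)%N -> f (Posz j) = base j.
Proof. by move=> Hj; rewrite /= -[j]add0n -window_up_shift //= nth_mkseq. Qed.

Lemma rel_solution_up n : f (Posz n + K%:Z) =
  reduce (inv_word (concat_map (alt_Pf f (Posz n)) (iota 0 K))
          ++ concat_map (alt_fP f (Posz n)) (iota 0 K.+1)).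
Proof.
have K0 := K_gt0.
have -> : Posz n + K%:Z = Posz n.+1 + (K.-1)%:Z by rewrite -!PoszD addSnnS prednK.
rewrite window_upE ?prednK // [window_up n.+1]/= nth_rcons size_behead.
rewrite size_window_up ltnn eqxx /fwd_next.
congr reduce; congr (_ ++ _); [congr inv_word|];
  rewrite /concat_map; congr flatten; apply/eq_in_map => i;
  rewrite mem_iota add0n => /andP[_ Hi].
  by rewrite /fwd_Pf /alt_Pf window_upE.
rewrite /fwd_fP /alt_fP; case: ifP => // i_even; rewrite window_upE //.
by rewrite ltnS leq_eqVlt in Hi; case/orP: Hi => // /eqP Hi; rewrite Hi K_odd in i_even.
Qed.

Lemma rel_solution_down n : f (Negz n) =
  reduce (concat_map (alt_Pf f (Negz n)) (iota 0 K.+1)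
          ++ inv_word (concat_map (alt_fP f (Negz n)) (iota 1 K))).
Proof.
rewrite /= /bwd_next.
congr reduce; congr (_ ++ _); [|congr inv_word];
  rewrite /concat_map; congr flatten; apply/eq_in_map => i;
  rewrite mem_iota => /andP[H1 Hi].
  rewrite /bwd_Pf /alt_Pf; case: ifP => // i_odd.
  case: i i_odd H1 Hi => [|i] // _ _ Hi /=.
  by rewrite window_downE //; congr f; rewrite NegzE; lia.
rewrite /bwd_fP /alt_fP; case: ifP => // _.
case: i H1 Hi => [|i] // _ Hi /=.
rewrite window_downE; last by rewrite -ltnS -[K.+1]add1n.
by congr f; rewrite NegzE; lia.
Qed.

Lemma rel_solution_rel s :
  reduce (concat_map (alt_fP f s) (iota 0 K.+1)) =
  reduce (concat_map (alt_Pf f s) (iota 0 K.+1)).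
Proof.
case: s => n.
  have E : iota 0 K.+1 = iota 0 K ++ [:: K] by rewrite -addn1 iotaD.
  rewrite [in RHS]E concat_map_cat.
  have -> : concat_map (alt_Pf f n) [:: K] = f (Posz n + K%:Z).
    by rewrite /concat_map /= /alt_Pf K_odd cats0.
  by rewrite rel_solution_up -reduce_catr catA reduce_catl reduce_cancel.
have -> : concat_map (alt_fP f (Negz n)) (iota 0 K.+1) =
    f (Negz n) ++ concat_map (alt_fP f (Negz n)) (iota 1 K).
  by rewrite /concat_map /= /alt_fP /= subn0.
by rewrite rel_solution_down -reduce_catl -catA reduce_catr reduce_cancel_inv cats0.
Qed.

End RelationSolution.

Section ExponentSum.
Local Open Scope ring_scope.
Variable X : Type.
Implicit Types (w x y : word X).

Lemma expsum_cons (a : X * bool) w :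
  expsum (a :: w) = (if a.2 then -1 else 1) + expsum w.
Proof. by rewrite /expsum big_cons. Qed.

Lemma expsum_cat x y : expsum (x ++ y) = expsum x + expsum y.
Proof. by rewrite /expsum big_cat. Qed.

Lemma expsum_inv x : expsum (inv_word x) = - expsum x.
Proof.
elim: x => [|a x IH]; first by rewrite /expsum big_nil.
rewrite inv_word_cons expsum_cat IH !expsum_cons /expsum big_nil.
by case: a => v [] /=; lia.
Qed.

Lemma expsum_positive (g : nat -> X) l :
  expsum [seq (g i, false) | i <- l] = (size l)%:Z.
Proof.
elim: l => [|i l IH] /=; first by rewrite /expsum big_nil.
by rewrite expsum_cons IH /=; lia.
Qed.

End ExponentSum.

(* Equality in G_Gamma, and the Reidemeister-Schreier generators of K_Gamma
   relative to the transversal {r^k}: sgen v k = r^k v r^-1 r^-k. *)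
Section ArtinWords.
Local Open Scope ring_scope.
Variables (V : finType) (e : rel V) (m : V -> V -> nat).
Local Notation "x ~ y" := (artin_eq e m x y) (at level 70).

Lemma ae_congr x y p q : x ~ y -> p ++ x ++ q ~ p ++ y ++ q.
Proof.
elim=> {x y}.
- by move=> w; apply: ae_refl.
- by move=> w1 w2 _; apply: ae_sym.
- by move=> w1 w2 w3 _ H1 _; apply: ae_trans H1.
- by move=> p0 q0 a; have := ae_cancel e m (p ++ p0) (q0 ++ q) a; rewrite -!catA.
- by move=> p0 q0 u v Huv; have := ae_rel m (p ++ p0) (q0 ++ q) Huv; rewrite -!catA.
Qed.

Lemma ae_catl x y p : x ~ y -> p ++ x ~ p ++ y.
Proof. by move=> H; have := ae_congr p [::] H; rewrite !cats0. Qed.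

Lemma ae_catr x y q : x ~ y -> x ++ q ~ y ++ q.
Proof. exact: ae_congr [::] q. Qed.

Lemma ae_cancel_tail p a : p ++ [:: a; inv_letter a] ~ p.
Proof. by have := ae_cancel e m p [::] a; rewrite [p ++ [::]]cats0. Qed.

Lemma ae_cat x y x' y' : x ~ x' -> y ~ y' -> x ++ y ~ x' ++ y'.
Proof. by move=> H1 H2; apply: ae_trans (ae_catr _ H1) (ae_catl _ H2). Qed.

Lemma ae_inv_r x : x ++ inv_word x ~ [::].
Proof.
elim: x => [|a x IH] /=; first exact: ae_refl.
rewrite inv_word_cons.
apply: (ae_trans (w2 := [:: a] ++ [:: inv_letter a])).
  by have := ae_congr [:: a] [:: inv_letter a] IH; rewrite /= -catA.
exact: ae_cancel e m [::] [::] a.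
Qed.

Lemma ae_inv_l x : inv_word x ++ x ~ [::].
Proof. by have := ae_inv_r (inv_word x); rewrite inv_wordK. Qed.

Lemma ae_inv x y : x ~ y -> inv_word x ~ inv_word y.
Proof.
move=> H.
apply: (ae_trans (w2 := inv_word x ++ (y ++ inv_word y))).
  by have := ae_catl (inv_word x) (ae_sym (ae_inv_r y)); rewrite cats0.
apply: (ae_trans (w2 := inv_word x ++ (x ++ inv_word y))).
  exact/ae_catl/ae_catr/ae_sym.
by rewrite catA; exact: ae_catr (ae_inv_l x).
Qed.

Lemma ae_concat_map (F G : nat -> word V) l :
  (forall i, i \in l -> F i ~ G i) -> concat_map F l ~ concat_map G l.
Proof.
elim: l => [|i l IH] H /=; first exact: ae_refl.
apply: ae_cat; first by apply: H; rewrite inE eqxx.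
by apply: IH => j Hj; apply: H; rewrite inE Hj orbT.
Qed.

Variable r : V.

Definition root_pow (k : int) : word V :=
  match k with Posz n => nseq n (r, false) | Negz n => nseq n.+1 (r, true) end.

Lemma root_pow_succ k : root_pow (k + 1) ~ root_pow k ++ [:: (r, false)].
Proof.
case: k => [n|[|n]].
- have -> : Posz n + 1 = Posz (n + 1)%N by lia.
  by rewrite /= nseqD; exact: ae_refl.
- exact/ae_sym/(ae_cancel e m [::] [::] (r, true)).
have -> : Negz n.+1 + 1 = Negz n by rewrite !NegzE; lia.
have -> : root_pow (Negz n.+1) ++ [:: (r, false)] =
    nseq n.+1 (r, true) ++ [:: (r, true); inv_letter (r, true)].
  by rewrite [root_pow _]/root_pow -[n.+2]addn1 nseqD -catA.
exact/ae_sym/ae_cancel_tail.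
Qed.

Lemma root_pow_pred k : root_pow k ++ [:: (r, true)] ~ root_pow (k - 1).
Proof.
have H := root_pow_succ (k - 1); rewrite subrK in H.
apply: (ae_trans (w2 := (root_pow (k - 1) ++ [:: (r, false)]) ++ [:: (r, true)])).
  exact: ae_catr.
by rewrite -catA; exact: ae_cancel_tail.
Qed.

Lemma root_pow_add a b : root_pow a ++ root_pow b ~ root_pow (a + b).
Proof.
case: b => n; elim: n => [|n IH].
- by rewrite /= cats0 addr0; exact: ae_refl.
- have -> : root_pow (Posz n.+1) = root_pow (Posz n) ++ [:: (r, false)].
    by rewrite [LHS]/root_pow -addn1 nseqD.
  rewrite catA; apply: ae_trans (ae_catr _ IH) _.
  have -> : a + Posz n.+1 = (a + Posz n) + 1 by lia.
  exact/ae_sym/root_pow_succ.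
- by rewrite NegzE; exact: root_pow_pred.
have -> : root_pow (Negz n.+1) = root_pow (Negz n) ++ [:: (r, true)].
  by rewrite [LHS]/root_pow -[n.+2]addn1 nseqD.
rewrite catA; apply: ae_trans (ae_catr _ IH) _.
have -> : a + Negz n.+1 = (a + Negz n) - 1 by rewrite !NegzE; lia.
exact: root_pow_pred.
Qed.

Lemma inv_root_pow k : inv_word (root_pow k) = root_pow (- k).
Proof.
case: k => [[|n]|n] //.
  by rewrite -NegzE /inv_word map_nseq rev_nseq.
by rewrite NegzE opprK /inv_word map_nseq rev_nseq.
Qed.

Definition sgen (v : V) (k : int) : word V :=
  root_pow k ++ [:: (v, false); (r, true)] ++ root_pow (- k).

Lemma sgen_root k : sgen r k ~ [::].
Proof.
apply: ae_trans (ae_cancel e m (root_pow k) (root_pow (- k)) (r, false)) _.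
by apply: ae_trans (root_pow_add _ _) _; rewrite addrN; exact: ae_refl.
Qed.

(* Rewriting a coset representative followed by a letter as a Schreier
   generator (or its inverse) followed by the next coset representative. *)
Lemma coset_step_pos v s :
  root_pow s ++ [:: (v, false)] ~ sgen v s ++ root_pow (s + 1).
Proof.
apply: ae_sym; rewrite /sgen -!catA.
apply: ae_trans (ae_catl _ (ae_catl _ (root_pow_add _ _))) _.
have -> : - s + (s + 1) = 1 by lia.
rewrite -[_ ++ root_pow 1]/([:: (v, false)] ++ [:: (r, true); inv_letter (r, true)]).
by rewrite catA; exact: ae_cancel_tail.
Qed.

Lemma coset_step_neg v s :
  root_pow s ++ [:: (v, true)] ~ inv_word (sgen v (s - 1)) ++ root_pow (s - 1).
Proof.
rewrite /sgen !inv_word_cat !inv_root_pow opprK /= -!catA.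
apply: ae_sym; apply: ae_trans (ae_catl _ (ae_catl _ (root_pow_add _ _))) _.
rewrite addNr /= /inv_letter /=.
rewrite -[[:: (r, false); (v, true)]]/([:: (r, false)] ++ [:: (v, true)]) catA.
by apply: ae_catr; have := root_pow_succ (s - 1); rewrite subrK; exact: ae_sym.
Qed.

Lemma expsum_root_pow k : expsum (root_pow k) = k.
Proof.
have expsum_nseq b j : expsum (nseq j (r, b)) = if b then - (j%:Z) else j%:Z.
  elim: j => [|j IH]; first by rewrite /expsum big_nil; case: b.
  by rewrite /= expsum_cons IH /=; case: (b); lia.
by case: k => j; rewrite /root_pow expsum_nseq // NegzE.
Qed.

Lemma expsum_sgen v k : expsum (sgen v k) = 0.
Proof. by rewrite /sgen !expsum_cat !expsum_root_pow !expsum_cons /expsum big_nil /=; lia. Qed.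

Lemma sgen_telescope (g : nat -> V) M s :
  concat_map (fun i => sgen (g i) (s + i%:Z)) (iota 0 M) ~
  root_pow s ++ [seq (g i, false) | i <- iota 0 M] ++ root_pow (- (s + M%:Z)).
Proof.
elim: M => [|M IH].
  apply: ae_sym; apply: ae_trans (root_pow_add _ _) _.
  by rewrite addr0 subrr; exact: ae_refl.
rewrite -addn1 iotaD concat_map_cat map_cat.
apply: ae_trans (ae_catr _ IH) _.
rewrite /concat_map /= cats0 add0n /sgen -!catA; do 2 apply: ae_catl.
rewrite catA; apply: ae_trans (ae_catr _ (root_pow_add _ _)) _.
rewrite addNr /= -[[:: (g M, false), (r, true) & _]]/([:: (g M, false)] ++ root_pow (-1) ++ _).
apply: ae_catl; apply: ae_trans (root_pow_add _ _) _.
have -> : -1 + - (s + M%:Z) = - (s + (M + 1)%N%:Z) by lia.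
exact: ae_refl.
Qed.

Lemma prodwE (u v : V) M :
  prodw u v M = [seq ((if odd i then v else u), false) | i <- iota 0 M].
Proof. by rewrite /prodw /mkseq; apply: eq_map => i; case: odd. Qed.

Lemma sgen_relation (u v : V) s : e u v ->
  concat_map (fun i => sgen (if odd i then v else u) (s + i%:Z)) (iota 0 (m u v)) ~
  concat_map (fun i => sgen (if odd i then u else v) (s + i%:Z)) (iota 0 (m u v)).
Proof.
move=> Huv; apply: ae_trans (sgen_telescope _ _ _) _.
apply: ae_sym; apply: ae_trans (sgen_telescope _ _ _) _; apply: ae_sym.
by rewrite -!prodwE; exact: ae_rel.
Qed.

Section Substitution.
Variables (n : nat) (ws : 'I_n -> word V).
Local Notation S := (subst_word ws).

Lemma subst_cat x y : S (x ++ y) = S x ++ S y.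
Proof. by rewrite /subst_word map_cat flatten_cat. Qed.

Lemma subst_inv x : S (inv_word x) = inv_word (S x).
Proof.
elim: x => [|a x IH] //.
rewrite inv_word_cons subst_cat IH -[a :: x]cat1s subst_cat inv_word_cat.
by case: a => i []; rewrite /subst_word /inv_letter /= ?cats0 ?inv_wordK.
Qed.

Lemma subst_concat_map (F : nat -> word 'I_n) l :
  S (concat_map F l) = concat_map (fun i => S (F i)) l.
Proof. by elim: l => [|i l IH] //=; rewrite subst_cat IH. Qed.

Lemma subst_reduce w : S (reduce w) ~ S w.
Proof.
elim: w => [|a w IH] /=; first exact: ae_refl.
apply: (ae_trans (w2 := S (a :: reduce w))); last first.
  by rewrite -[a :: reduce w]cat1s -[a :: w]cat1s !subst_cat; exact: ae_catl.
case: (reduce w) => [|b t] /=; first exact: ae_refl.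
case: eqP => [-> | _]; last exact: ae_refl.
rewrite -[a :: inv_letter a :: t]/([:: a; inv_letter a] ++ t) subst_cat.
apply: ae_sym (ae_catr (S t) (_ : _ ~ [::])).
case: a => i []; rewrite /subst_word /inv_letter /= ?cats0.
  exact: ae_inv_l.
exact: ae_inv_r.
Qed.

End Substitution.

End ArtinWords.

Section ChildGenerators.
Local Open Scope ring_scope.
Variables (V : finType) (e : rel V) (m : V -> V -> nat) (r : V).
Variables (n : nat) (ws : 'I_n -> word V).
Local Notation "x ~ y" := (artin_eq e m x y) (at level 70).
Local Notation S := (subst_word ws).
Local Notation X := (sgen r).
Variables (c p : V) (K : nat) (P : int -> word 'I_n) (base : nat -> word 'I_n).
Hypothesis K_odd : odd K.
Hypothesis edge_cp : e c p.
Hypothesis label_cp : m c p = K.+1.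
Hypothesis parent_rep : forall t, X p t ~ S (P t).
Hypothesis base_rep : forall j, (j < K)%N -> X c (Posz j) ~ S (base j).
Local Notation f := (rel_solution P K base).

Definition sgen_cp s i := X (if odd i then p else c) (s + i%:Z).
Definition sgen_pc s i := X (if odd i then c else p) (s + i%:Z).

Lemma sgen_cp_pc s :
  concat_map (sgen_cp s) (iota 0 K.+1) ~ concat_map (sgen_pc s) (iota 0 K.+1).
Proof. by have := sgen_relation m r s edge_cp; rewrite label_cp. Qed.

Lemma subst_alt_fP s l :
  (forall i, i \in l -> ~~ odd i -> X c (s + i%:Z) ~ S (f (s + i%:Z))) ->
  concat_map (sgen_cp s) l ~ S (concat_map (alt_fP P f s) l).
Proof.
move=> Hc; rewrite subst_concat_map; apply: ae_concat_map => i Hi.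
rewrite /sgen_cp /alt_fP; case: ifP => i_odd; first exact: parent_rep.
by apply: Hc => //; rewrite i_odd.
Qed.

Lemma subst_alt_Pf s l :
  (forall i, i \in l -> odd i -> X c (s + i%:Z) ~ S (f (s + i%:Z))) ->
  concat_map (sgen_pc s) l ~ S (concat_map (alt_Pf P f s) l).
Proof.
move=> Hc; rewrite subst_concat_map; apply: ae_concat_map => i Hi.
rewrite /sgen_pc /alt_Pf; case: ifP => i_odd; last exact: parent_rep.
exact: Hc.
Qed.

Lemma child_rep_up (k : nat) :
  (forall i, (i < K)%N -> X c (Posz k + i%:Z) ~ S (f (Posz k + i%:Z))) ->
  X c (Posz k + K%:Z) ~ S (f (Posz k + K%:Z)).
Proof.
move=> IH; rewrite rel_solution_up //.
apply/ae_sym/(ae_trans (subst_reduce _ _ _ _)); rewrite subst_cat subst_inv.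
have HPf : concat_map (sgen_pc k) (iota 0 K) ~ S (concat_map (alt_Pf P f k) (iota 0 K)).
  by apply: subst_alt_Pf => i; rewrite mem_iota => /andP[_ Hi] _; apply: IH.
have HfP : concat_map (sgen_cp k) (iota 0 K.+1) ~
           S (concat_map (alt_fP P f k) (iota 0 K.+1)).
  apply: subst_alt_fP => i; rewrite mem_iota => /andP[_ Hi] i_even; apply: IH.
  have : i != K by apply/eqP => iK; rewrite iK K_odd in i_even.
  lia.
apply: ae_trans (ae_cat (ae_inv (ae_sym HPf)) (ae_sym HfP)) _.
apply: ae_trans (ae_catl _ (sgen_cp_pc k)) _.
rewrite -addn1 iotaD concat_map_cat catA add0n.
apply: ae_trans (ae_catr _ (ae_inv_l e m _)) _.
by rewrite /concat_map /= /sgen_pc K_odd cats0; exact: ae_refl.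
Qed.

Lemma child_rep_down (k : nat) :
  (forall i, (0 < i <= K)%N -> X c (Negz k + i%:Z) ~ S (f (Negz k + i%:Z))) ->
  X c (Negz k) ~ S (f (Negz k)).
Proof.
move=> IH; rewrite rel_solution_down //.
apply/ae_sym/(ae_trans (subst_reduce _ _ _ _)); rewrite subst_cat subst_inv.
have HPf : concat_map (sgen_pc (Negz k)) (iota 0 K.+1) ~
           S (concat_map (alt_Pf P f (Negz k)) (iota 0 K.+1)).
  apply: subst_alt_Pf => i; rewrite mem_iota => /andP[_ Hi] i_odd.
  by apply: IH; case: i i_odd Hi.
have HfP : concat_map (sgen_cp (Negz k)) (iota 1 K) ~
           S (concat_map (alt_fP P f (Negz k)) (iota 1 K)).
  by apply: subst_alt_fP => i; rewrite mem_iota => /andP[Hi1 HiK] _; apply: IH; lia.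
apply: ae_trans (ae_cat (ae_sym HPf) (ae_inv (ae_sym HfP))) _.
apply: ae_trans (ae_catr _ (ae_sym (sgen_cp_pc _))) _.
have -> : concat_map (sgen_cp (Negz k)) (iota 0 K.+1) =
          sgen_cp (Negz k) 0 ++ concat_map (sgen_cp (Negz k)) (iota 1 K) by [].
have -> : sgen_cp (Negz k) 0 = X c (Negz k) by rewrite /sgen_cp addr0.
rewrite -catA.
by have := ae_catl (X c (Negz k)) (ae_inv_r e m (concat_map (sgen_cp (Negz k)) (iota 1 K)));
  rewrite cats0.
Qed.

Lemma child_rep_nonneg (j : nat) : X c (Posz j) ~ S (f (Posz j)).
Proof.
elim/ltn_ind: j => j IH.
have [jK|Kj] := ltnP j K; first by rewrite rel_solution_base //; exact: base_rep.
have -> : Posz j = Posz (j - K)%N + K%:Z by rewrite -PoszD subnK.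
by apply: child_rep_up => i Hi; rewrite -PoszD; apply: IH; lia.
Qed.

Lemma child_rep_from (k : nat) t : - (k%:Z) <= t -> X c t ~ S (f t).
Proof.
elim: k t => [|k IH] [j|j] Ht; try exact: child_rep_nonneg.
  by move: Ht; rewrite NegzE; lia.
have [Ht'|Ht'] := boolP (- (k%:Z) <= Negz j); first exact: IH.
have -> : j = k by move: Ht Ht'; rewrite NegzE; lia.
by apply: child_rep_down => i Hi; apply: IH; rewrite NegzE; lia.
Qed.

Lemma child_rep t : X c t ~ S (f t).
Proof. by apply: (@child_rep_from `|t|%N); lia. Qed.

End ChildGenerators.

(* The basis consists of the
   Schreier generators sgen c j with c <> r and 0 <= j < m(c, parent c) - 1.
   The free word rho c t representing sgen c t is obtained by solving the edge
   recurrences from the root outwards (rho r is trivial, as sgen r t is). *)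
Section FreeBasis.
Local Open Scope ring_scope.
Variables (V : finType) (e : rel V) (m : V -> V -> nat) (r : V).
Hypothesis e_sym : forall x y, e x y = e y x.
Hypothesis e_irr : forall x, ~~ e x x.
Hypothesis e_conn : forall x y, connect e x y.
Hypothesis e_acyc : forall c : seq V, uniq c -> (3 <= size c)%N -> ~~ cycle e c.
Hypothesis labels : artin_labels e m.
Hypothesis labels_even : even_labels e m.
Local Notation "x ~ y" := (artin_eq e m x y) (at level 70).
Local Notation parent := (parent r e_conn).
Local Notation depth := (depth r e_conn).
Local Notation X := (sgen r).

Lemma parent_edge c : c != r -> e c (parent c).
Proof. by move=> Hc; have /andP[H _] := parentP e_conn Hc; rewrite e_sym. Qed.

Lemma label_parent c : c != r ->
  m c (parent c) = (m c (parent c)).-1.+1 /\ odd (m c (parent c)).-1.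
Proof.
move=> Hc; have He := parent_edge Hc.
have [_ m_ge2] := labels He; have m_even := labels_even He.
have E : m c (parent c) = (m c (parent c)).-1.+1 by rewrite prednK //; lia.
by split => //; move: m_even; rewrite {1}E /= negbK.
Qed.

Definition max_label := (\max_(v : V) m v (parent v))%N.
Definition in_basis (x : V * 'I_max_label.+1) : bool :=
  (x.1 != r) && (x.2 < (m x.1 (parent x.1)).-1)%N.
Definition basis := {x : V * 'I_max_label.+1 | in_basis x}.
Definition rank := #|{: basis}|.
Definition basis_word (i : 'I_rank) : word V :=
  X (val (enum_val i)).1 (Posz (val (enum_val i)).2).
Local Notation S := (subst_word basis_word).

Definition basis_letter (c : V) (j : nat) : word 'I_rank :=
  if (insub (c, inord j) : option basis) is Some b
  then [:: (enum_rank b, false)] else [::].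

Lemma basis_letter_rep c j : c != r -> (j < (m c (parent c)).-1)%N ->
  X c (Posz j) ~ S (basis_letter c j).
Proof.
move=> Hc Hj.
have Hm : (m c (parent c) <= max_label)%N by apply: (leq_bigmax c).
have Hjm : (j < max_label.+1)%N by lia.
have Pb : in_basis (c, inord j) by rewrite /in_basis /= Hc inordK.
rewrite /basis_letter (insubT _ Pb) /= /basis_word /subst_word /= enum_rankK.
by rewrite SubK /= inordK // cats0; exact: ae_refl.
Qed.

(* rho, defined by recursion along the path to the root (N bounds the depth). *)
Fixpoint rho_iter (N : nat) (c : V) : int -> word 'I_rank :=
  if N is N'.+1 then
    (if c == r then fun _ => [::]
     else rel_solution (rho_iter N' (parent c)) (m c (parent c)).-1 (basis_letter c))
  else fun _ => [::].

Definition rho c := rho_iter (\max_(v : V) depth v).+1 c.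

Lemma rho_iter_stable N x : (depth x < N)%N -> rho_iter N x = rho_iter N.+1 x.
Proof.
elim: N x => [|N IH] x // Hx.
rewrite [LHS]/= [RHS]/=; case: eqP => // /eqP Hxr.
have /andP[_ Hd] := parentP e_conn Hxr.
by rewrite IH //; lia.
Qed.

Lemma rho_root : rho r = fun _ => [::].
Proof. by rewrite /rho /= eqxx. Qed.

Lemma rho_child c : c != r ->
  rho c = rel_solution (rho (parent c)) (m c (parent c)).-1 (basis_letter c).
Proof.
move=> Hc; rewrite /rho /= (negbTE Hc).
have /andP[_ Hd] := parentP e_conn Hc.
have Hm : (depth c <= \max_(v : V) depth v)%N by apply: (leq_bigmax c).
by rewrite rho_iter_stable //; lia.
Qed.

Lemma sgen_rep c t : X c t ~ S (rho c t).
Proof.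
elim: {c}(depth c).+1 {-2}c (ltnSn (depth c)) t => [|N IH] c // Hc t.
have [->|Hcr] := eqVneq c r; first by rewrite rho_root; exact: sgen_root.
have [E K_odd] := label_parent Hcr.
have /andP[_ Hd] := parentP e_conn Hcr.
rewrite (rho_child Hcr).
apply: (child_rep K_odd (parent_edge Hcr) E) => [t'|j Hj]; first by apply: IH; lia.
exact: basis_letter_rep.
Qed.

(* The retraction G_Gamma -> F(basis), defined on K_Gamma: it reads a word
   letter by letter, keeping track of the current coset r^s, and replaces the
   letter by the free word representing the corresponding Schreier generator. *)
Fixpoint retract (w : word V) (s : int) : word 'I_rank :=
  match w with
  | [::] => [::]
  | a :: w' => (if a.2 then inv_word (rho a.1 (s - 1)) else rho a.1 s) ++
               retract w' (if a.2 then s - 1 else s + 1)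
  end.

Lemma retract_cat x y s : retract (x ++ y) s = retract x s ++ retract y (s + expsum x).
Proof.
elim: x s => [|a x IH] s /=; first by rewrite /expsum big_nil addr0.
rewrite IH catA expsum_cons; congr (_ ++ retract y _).
by case: a.2; lia.
Qed.

Lemma retract_positive (g : nat -> V) M t :
  retract [seq (g i, false) | i <- iota 0 M] t =
  concat_map (fun i => rho (g i) (t + i%:Z)) (iota 0 M).
Proof.
elim: M g t => [|M IH] g t //.
rewrite [iota 0 M.+1]/= (iotaDl 1 0 M) map_cons -map_comp /= IH /concat_map /=.
rewrite -map_comp addr0; congr (_ ++ flatten _).
by apply: eq_map => i /=; congr rho; lia.
Qed.

Lemma rho_relation c t : c != r ->
  reduce (concat_map (fun i => rho (if odd i then parent c else c) (t + i%:Z))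
                     (iota 0 (m c (parent c)))) =
  reduce (concat_map (fun i => rho (if odd i then c else parent c) (t + i%:Z))
                     (iota 0 (m c (parent c)))).
Proof.
move=> Hc; have [E K_odd] := label_parent Hc.
have fP : (fun i => rho (if odd i then parent c else c) (t + i%:Z)) =1
          alt_fP (rho (parent c)) (rho c) t by move=> i; rewrite /alt_fP; case: odd.
have Pf : (fun i => rho (if odd i then c else parent c) (t + i%:Z)) =1
          alt_Pf (rho (parent c)) (rho c) t by move=> i; rewrite /alt_Pf; case: odd.
rewrite /concat_map (eq_map fP) (eq_map Pf) E (rho_child Hc).
exact: rel_solution_rel.
Qed.

Lemma retract_relation p q u v s : e u v ->
  reduce (retract (p ++ prodw u v (m u v) ++ q) s) =
  reduce (retract (p ++ prodw v u (m u v) ++ q) s).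
Proof.
move=> Huv; rewrite !retract_cat !prodwE !expsum_positive; apply: reduce_cong.
rewrite !retract_positive.
have [m_sym _] := labels Huv.
have not_root x y : y = parent x -> e x y -> x != r.
  by move=> -> Hxy; apply: contraTneq Hxy => ->; rewrite parent_root (negbTE (e_irr r)).
case: (edge_parent r e_sym e_irr e_conn e_acyc Huv) => Hp.
  rewrite m_sym Hp; apply/esym/rho_relation.
  by apply: (not_root v u); rewrite // e_sym.
by rewrite Hp; apply/rho_relation/(not_root u v).
Qed.

Lemma retract_artin_eq w1 w2 : w1 ~ w2 -> forall s, reduce (retract w1 s) = reduce (retract w2 s).
Proof.
elim=> {w1 w2}.
- by [].
- by move=> w1 w2 _ H s; rewrite H.
- by move=> w1 w2 w3 _ H1 _ H2 s; rewrite H1 H2.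
- move=> p q [v b] s.
  have E0 : expsum [:: (v, b); inv_letter (v, b)] = 0.
    by case: b; rewrite /expsum !big_cons big_nil /=; lia.
  rewrite !retract_cat E0 addr0.
  case: b E0 => _ /=; rewrite ?cats0 ?addrK; apply: reduce_delete.
    exact: reduce_cancel_inv.
  exact: reduce_cancel.
- by move=> p q u v Huv s; apply: retract_relation.
Qed.

Lemma retract_section w s :
  root_pow r s ++ w ~ S (retract w s) ++ root_pow r (s + expsum w).
Proof.
elim: w s => [|[v b] w IH] s /=.
  by rewrite cats0 /expsum big_nil addr0; exact: ae_refl.
rewrite expsum_cons subst_cat -catA -cat1s catA.
case: b => /=.
  apply: ae_trans (ae_catr w (coset_step_neg e m r v s)) _.
  rewrite -catA; apply: ae_cat; first by rewrite subst_inv; exact/ae_inv/sgen_rep.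
  have -> : s + (-1 + expsum w) = s - 1 + expsum w by lia.
  exact: IH.
apply: ae_trans (ae_catr w (coset_step_pos e m r v s)) _.
rewrite -catA; apply: ae_cat; first exact: sgen_rep.
have -> : s + (1 + expsum w) = s + 1 + expsum w by lia.
exact: IH.
Qed.

Lemma retract_root_pow k s : retract (root_pow r k) s = [::].
Proof.
have retract_nseq b j s' : retract (nseq j (r, b)) s' = [::].
  by elim: j s' => [|j IH] s' //=; rewrite IH rho_root; case: (b).
by case: k => j; rewrite /root_pow retract_nseq.
Qed.

Lemma retract_sgen c t s : retract (X c t) s = rho c (s + t).
Proof.
rewrite /sgen retract_cat retract_root_pow expsum_root_pow /=.
by rewrite retract_root_pow rho_root /= !cats0.
Qed.

Lemma retract_sgen_inv c t s : retract (inv_word (X c t)) s = inv_word (rho c (s + t)).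
Proof.
rewrite /sgen !inv_word_cat !inv_root_pow opprK !retract_cat retract_root_pow.
by rewrite expsum_root_pow /= retract_root_pow rho_root /= !cats0 addrK.
Qed.

Lemma retract_basis_word i : retract (basis_word i) 0 = [:: (i, false)].
Proof.
rewrite /basis_word retract_sgen add0r.
have /andP[Hc Hj] := valP (enum_val i).
have [_ K_odd] := label_parent Hc.
rewrite (rho_child Hc) rel_solution_base // /basis_letter.
have -> : ((val (enum_val i)).1, inord (val (val (enum_val i)).2)) = val (enum_val i).
  by rewrite inord_val; case: (val (enum_val i)).
by rewrite valK enum_valK.
Qed.

Lemma retract_subst u : retract (S u) 0 = u.
Proof.
elim: u => [|[i b] u IH] //.
rewrite -cat1s subst_cat retract_cat.
have -> : S [:: (i, b)] = if b then inv_word (basis_word i) else basis_word i.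
  by rewrite /subst_word /= cats0.
case: b; rewrite ?expsum_inv /basis_word expsum_sgen ?oppr0 addr0 IH.
  by rewrite retract_sgen_inv -retract_sgen -/(basis_word i) retract_basis_word.
by rewrite -/(basis_word i) retract_basis_word.
Qed.

(* The basis words freely generate K_Gamma: S has the left inverse retract
   (injectivity), and retract w 0 is a preimage of w in K_Gamma (surjectivity). *)
Lemma K_free_basis : K_fg_free e m.
Proof.
exists rank, basis_word; split.
- by move=> i; rewrite /basis_word expsum_sgen.
- move=> u u_red Su1.
  have := retract_artin_eq Su1 0; rewrite retract_subst /= => reduce_u.
  by rewrite -(reduce_id (reduced_to_rec u_red)) reduce_u.
- move=> w w_K; exists (retract w 0).
  by have := retract_section w 0; rewrite w_K addr0 /= cats0.
Qed.

End FreeBasis.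

Theorem proposition6p5 (V : finType) (e : rel V) (m : V -> V -> nat) :
  is_tree e -> artin_labels e m -> even_labels e m -> K_fg_free e m.
Proof.
case=> [[e_sym e_irr] V_nonempty e_conn e_acyc] labels labels_even.
have /card_gt0P[r _] := V_nonempty.
exact: (K_free_basis r e_sym e_irr e_conn e_acyc labels labels_even).
Qed.
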